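(* Let $p\neq\operatorname{char}k_0$ be a prime and $n\geq1$. Let $T\subset\operatorname{PGL}_{p^n}$ be a split maximal torus with root system $\Phi\subset X(T)$ and Weyl group $W$. There exists a surjective homomorphism $\varepsilon:X(T)\to\mathbb{F}_p^n$ such that $\varepsilon(\alpha)\neq0$ for all $\alpha\in\Phi$, $X(T)^{W(\varepsilon)_p}=\{0\}$ for a Sylow $p$-subgroup $W(\varepsilon)_p$ of $W(\varepsilon)$, and $$\operatorname{Rank}(W(\varepsilon),X(T);p)\geq n\,p^n.$$
   Context: $\operatorname{PGL}_{p^n}$ is over a field $k_0$. $W(\varepsilon)=\{w\in W:\varepsilon(w.\chi)=\varepsilon(\chi)\text{ for all }\chi\in X(T)\}$. For a finite group $S$ acting on a finitely generated abelian group $\mathcal{U}$ with Sylow $p$-subgroup $S_p$, $\operatorname{Rank}(S,\mathcal{U};p)$ is the minimal size of an $S_p$-invariant subset of $\mathcal{U}$ generating a subgroup of finite index prime to $p$. *)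

From HB Require Import structures.
From mathcomp Require Import all_boot all_order all_algebra all_fingroup all_solvable.
From mathcomp Require Import boolp.
Set Implicit Arguments. Unset Strict Implicit. Unset Printing Implicit Defensive.
Import GRing.Theory.
Local Open Scope ring_scope.

(* Concrete model of the split maximal torus T of PGL_N (N = p^n):
   X(T) = characters of the diagonal torus of GL_N trivial on scalars
        = { chi in Z^N | sum_i chi_i = 0 }, elements are row vectors 'rV[int]_N. *)

Definition charX (N : nat) : pred 'rV[int]_N :=
  fun chi => \sum_(i < N) chi 0 i == 0.
Arguments charX : clear implicits.

Definition rootv (N : nat) (i j : 'I_N) : 'rV[int]_N :=
  \row_k (((k == i) : nat)%:Z - ((k == j) : nat)%:Z).

Definition is_root (N : nat) (a : 'rV[int]_N) : Prop :=
  exists i j : 'I_N, i != j /\ a = rootv i j.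

(* Weyl group W = S_N acting on X(T) by permuting coordinates:
   (w.chi)_i = chi_{w^-1 i}. *)
Definition wact (N : nat) (w : {perm 'I_N}) (chi : 'rV[int]_N) : 'rV[int]_N :=
  \row_i chi 0 ((w^-1)%g i).

Definition Weps (N n : nat) (p : nat) (eps : 'rV[int]_N -> 'rV['F_p]_n)
  : {set {perm 'I_N}} :=
  [set w : {perm 'I_N} | `[< forall chi, chi \in charX N -> eps (wact w chi) = eps chi >] ].

Definition in_span (N : nat) (s : seq 'rV[int]_N) (x : 'rV[int]_N) : Prop :=
  exists c : 'I_(size s) -> int, x = \sum_(i < size s) (s`_i) *~ c i.

(* The subgroup L (given as a predicate, contained in X) has index d in X:
   X / L has exactly d elements, i.e. there are d coset representatives in X,
   pairwise incongruent mod L, such that every x in X is congruent to one. *)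
Definition has_index (N : nat) (X : pred 'rV[int]_N) (L : 'rV[int]_N -> Prop)
  (d : nat) : Prop :=
  exists r : 'I_d -> 'rV[int]_N,
    (forall i, r i \in X) /\
    (forall x, x \in X -> exists i, L (x - r i)) /\
    (forall i j, L (r i - r j) -> i = j).

Definition gen_index_prime_to (N p : nat) (X : pred 'rV[int]_N)
  (s : seq 'rV[int]_N) : Prop :=
  exists d : nat, has_index X (in_span s) d /\ coprime d p.

(* Rank(S, X; p) >= m, where P is a Sylow p-subgroup of S:
   every P-invariant finite subset of X generating a subgroup of finite index
   prime to p has at least m elements (Rank is the minimum of these sizes). *)
Definition Rank_ge (N p : nat) (P : {set {perm 'I_N}}) (X : pred 'rV[int]_N)
  (m : nat) : Prop :=
  forall s : seq 'rV[int]_N,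
    uniq s ->
    {subset s <= X} ->
    (forall w x, w \in P -> x \in s -> wact w x \in s) ->
    gen_index_prime_to p X s ->
    (m <= size s)%N.

From HB Require Import structures.
From mathcomp Require Import all_boot all_order all_algebra all_fingroup all_solvable.
From mathcomp Require Import boolp.
Set Implicit Arguments. Unset Strict Implicit. Unset Printing Implicit Defensive.
Import GRing.Theory Num.Theory.
Local Open Scope ring_scope.

(* Index the coordinates of Z^(p^n) by V = F_p^n through a bijection phi and let
   eps send e_i to phi i. A root e_i - e_j goes to phi i - phi j <> 0, and
   W(eps) is exactly the group of translations of V: a p-group of order p^n,
   hence its own Sylow subgroup, and its only fixed point in X(T) is 0.
   If a translation-stable set s generates a subgroup of index d prime to p,
   then eps(<s>) contains eps(d X(T)) = V, so s has at least n elements with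
   pairwise distinct nonzero eps-values. A character fixed by a nonzero
   translation has eps-value 0, so each of these has a free orbit of size p^n
   inside its own eps-fibre, and |s| >= n p^n. *)

Definition lin_ext (N : nat) (V : zmodType) (f : 'I_N -> V) (chi : 'rV[int]_N) : V :=
  \sum_k f k *~ chi 0 k.

Lemma rootvE N (i j : 'I_N) : rootv i j = delta_mx 0 i - delta_mx 0 j.
Proof. by apply/rowP => k; rewrite !mxE eqxx /= !natz. Qed.

Section LinearExtension.
Variables (N : nat) (V : zmodType) (f : 'I_N -> V).

Lemma lin_extB : {morph lin_ext f : x y / x - y}.
Proof.
move=> x y; rewrite /lin_ext -sumrB; apply: eq_bigr => k _.
by rewrite !mxE mulrzBr.
Qed.

HB.instance Definition _ := GRing.isZmodMorphism.Build _ _ (lin_ext f) lin_extB.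

Lemma lin_ext_delta i : lin_ext f (delta_mx 0 i) = f i.
Proof.
rewrite /lin_ext (bigD1 i) //= big1 => [|k /negbTE ki]; last by rewrite mxE ki.
by rewrite mxE !eqxx addr0.
Qed.

Lemma lin_ext_root i j : lin_ext f (rootv i j) = f i - f j.
Proof. by rewrite rootvE raddfB /= !lin_ext_delta. Qed.

Lemma lin_ext_wact w chi : lin_ext f (wact w chi) = lin_ext (f \o w) chi.
Proof.
rewrite /lin_ext (reindex_inj (@perm_inj _ w)); apply: eq_bigr => k _.
by rewrite mxE permK.
Qed.

Lemma lin_ext_addf g chi :
  lin_ext (fun i => f i + g i) chi = lin_ext f chi + lin_ext g chi.
Proof. by rewrite /lin_ext -big_split; apply: eq_bigr => k _; rewrite mulrzDl. Qed.

Lemma lin_ext_cst (t : V) chi : chi \in charX N -> lin_ext (fun=> t) chi = 0.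
Proof. by rewrite unfold_in /charX /lin_ext -mulrz_sumr => /eqP->. Qed.

End LinearExtension.

Lemma charX_lin_ext N chi : (chi \in charX N) = (lin_ext (fun=> 1 : int) chi == 0).
Proof.
by rewrite unfold_in /charX /lin_ext; under [in RHS]eq_bigr do rewrite intz.
Qed.

Lemma charX_root N (i j : 'I_N) : rootv i j \in charX N.
Proof. by rewrite charX_lin_ext lin_ext_root subrr. Qed.

Lemma charXD N : {in charX N &, forall x y, x + y \in charX N}.
Proof.
by move=> x y; rewrite !charX_lin_ext raddfD /= => /eqP-> /eqP->; rewrite addr0.
Qed.

Lemma charX_const0 N chi : chi \in charX N -> (forall i j, chi 0 i = chi 0 j) -> chi = 0.
Proof.
move=> /eqP chiX chi_cst; apply/rowP => i; rewrite mxE.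
have : chi 0 i *+ #|'I_N| = 0.
  by rewrite -chiX -sumr_const; apply: eq_bigr => j _; apply: chi_cst.
have N_gt0 : (0 < N)%N by apply: leq_ltn_trans (ltn_ord i).
by move/eqP; rewrite mulrn_eq0 card_ord eqn0Ngt N_gt0 => /eqP.
Qed.

Lemma wact_fixE N w (chi : 'rV[int]_N) :
  wact w chi = chi -> forall i, chi 0 (w i) = chi 0 i.
Proof. by move=> fix_chi i; rewrite -{1}fix_chi mxE permK. Qed.

Section Span.
Variables (N : nat) (s : seq 'rV[int]_N).

Lemma in_span0 : in_span s 0.
Proof. by exists (fun=> 0); rewrite big1 // => i _; rewrite mulr0z. Qed.

Lemma in_spanD x y : in_span s x -> in_span s y -> in_span s (x + y).
Proof.
move=> [c1 ->] [c2 ->]; exists (fun i => c1 i + c2 i).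
by rewrite -big_split; apply: eq_bigr => i _; rewrite mulrzDr.
Qed.

Lemma in_spanN x : in_span s x -> in_span s (- x).
Proof.
move=> [c ->]; exists (fun i => - c i).
by rewrite -sumrN; apply: eq_bigr => i _; rewrite mulrNz.
Qed.

Lemma in_span_sum (I : finType) (F : I -> 'rV[int]_N) :
  (forall i, in_span s (F i)) -> in_span s (\sum_i F i).
Proof. by move=> sF; elim/big_ind: _ => //; [apply: in_span0 | apply: in_spanD]. Qed.

Lemma lin_ext_in_span (K : fieldType) (vT : vectType K) (f : 'I_N -> vT) x :
  in_span s x -> lin_ext f x \in <<map (lin_ext f) s>>%VS.
Proof.
move=> [c ->]; rewrite raddf_sum; apply: rpred_sum => i _.
by rewrite raddfMz /= rpredMz // memv_span // map_f // mem_nth.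
Qed.

(* x + r i is congruent to r (sg i) for a permutation sg of the representatives,
   so summing over i leaves d x in <s>. *)
Lemma has_index_mulrn (X : pred 'rV[int]_N) d :
  {in X &, forall x y, x + y \in X} -> has_index X (in_span s) d ->
  {in X, forall x, in_span s (x *+ d)}.
Proof.
move=> addX [r [rX [r_cover r_inj]]] x xX.
have /fin_all_exists[sg sgP] i : exists j, in_span s (x + r i - r j).
  by apply: r_cover; apply: addX.
have sg_inj : injective sg.
  move=> i i' sg_ii'; apply: r_inj.
  have := in_spanD (sgP i) (in_spanN (sgP i')); rewrite sg_ii'.
  by rewrite opprB subrKA opprD addrACA subrr add0r.
have := in_span_sum sgP.
rewrite sumrB big_split /= [\sum_(i < d) r i](reindex_inj sg_inj) /= addrK.
by rewrite sumr_const card_ord.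
Qed.

End Span.

Lemma rV_span_card_nonzero (F : finFieldType) n (S : seq 'rV[F]_n) :
  (forall y, y \in <<S>>%VS) -> (n <= #|[set e in S | e != 0%R]|)%N.
Proof.
move=> S_full; set E := [set e in S | e != 0%R].
have S_E : (<<S>> <= <<enum E>>)%VS.
  apply/span_subvP => e eS; have [-> | e_nz] := eqVneq e 0; first exact: mem0v.
  by apply: memv_span; rewrite mem_enum inE eS.
rewrite cardE; apply: leq_trans (dim_span _).
apply: (@leq_trans (\dim (fullv : {vspace 'rV[F]_n}))).
  by rewrite dimvf dim_matrix mul1r.
by apply/dimvS/(subv_trans _ S_E)/subvP => y _; apply: S_full.
Qed.

Section PeriodicSums.
Variables (p n : nat) (t : 'rV['F_p]_n) (k : 'rV['F_p]_n -> 'F_p).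
Hypotheses (p_pr : prime p) (k_shift : forall v b, k (v + b *: t) = k v + b).

Lemma periodic_scale (T : Type) (F : 'rV['F_p]_n -> T) :
  (forall v, F (v + t) = F v) -> forall v b, F (v + b *: t) = F v.
Proof.
move=> F_per v b; rewrite -[b]natr_Zp scaler_nat.
by elim: (b : nat) => [|m IH]; rewrite ?mulr0n ?addr0 // mulrSr addrA F_per.
Qed.

Lemma sum_level_set_shift (M : zmodType) (F : 'rV['F_p]_n -> M) :
  (forall v, F (v + t) = F v) ->
  forall b, \sum_(v | k v == b) F v = \sum_(v | k v == 0) F v.
Proof.
move=> F_per b; rewrite (reindex (fun v => v + b *: t)); last first.
  by exists (fun v => v - b *: t) => v _; rewrite ?addrK ?subrK.
apply: eq_big => v; last by move=> _; apply: periodic_scale.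
by rewrite k_shift -{2}(add0r b) (inj_eq (addIr b)).
Qed.

Lemma sum_periodic (M : zmodType) (F : 'rV['F_p]_n -> M) :
  (forall v, F (v + t) = F v) -> \sum_v F v = (\sum_(v | k v == 0) F v) *+ p.
Proof.
move=> F_per; rewrite (partition_big k xpredT) //=.
by under eq_bigr do rewrite sum_level_set_shift //; rewrite sumr_const card_Fp.
Qed.

End PeriodicSums.

(* Write v = (v - k v *: t) + k v *: t with k t = 1. The first summand is
   t-periodic, so its total is a multiple of p; the second collects the level
   sets of k, which all carry the same c-mass, namely 1/p of the total mass 0. *)
Lemma periodic_weighted_sum p n (t : 'rV['F_p]_n) (c : 'rV['F_p]_n -> int) :
  prime p -> t != 0 -> (forall v, c (v + t) = c v) -> \sum_v c v = 0 ->
  \sum_v v *~ c v = 0.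
Proof.
move=> p_pr t_nz c_per c_sum0.
have [j tj_nz] : exists j, t 0 j != 0.
  apply/existsP; apply: contraNT t_nz => /existsPn t0.
  by apply/eqP/rowP => j; have := t0 j; rewrite mxE negbK => /eqP.
pose k (v : 'rV['F_p]_n) := v 0 j / t 0 j.
have k_shift v b : k (v + b *: t) = k v + b by rewrite /k !mxE mulrDl mulfK.
have slice0 : \sum_(v | k v == 0) c v = 0.
  move/eqP: c_sum0; rewrite (sum_periodic p_pr k_shift) // mulrn_eq0.
  by rewrite eqn0Ngt prime_gt0 //= => /eqP.
rewrite (eq_bigr (fun v => (v - k v *: t) *~ c v + (k v *: t) *~ c v)); last first.
  by move=> v _; rewrite -mulrzDl subrK.
rewrite big_split /= (sum_periodic p_pr k_shift); last first.
  move=> v; rewrite c_per -[t in v + t]scale1r k_shift scalerDl.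
  by rewrite opprD addrACA subrr addr0.
rewrite -scaler_nat (pcharf0 (pchar_Fp p_pr)) scale0r add0r.
rewrite (partition_big k xpredT) //= big1 // => b _.
rewrite (eq_bigr (fun v => (b *: t) *~ c v)) => [|v /eqP -> //].
by rewrite -mulrz_sumr (sum_level_set_shift k_shift) // slice0 mulr0z.
Qed.

Lemma sum_count_fibers (T : eqType) (J : finType) (f : T -> J) (A : {set J}) s :
  (\sum_(j in A) count (fun x => f x == j) s = count (fun x => f x \in A) s)%N.
Proof.
elim: s => [|x s IH] /=; first by rewrite big1.
rewrite big_split /= IH; congr addn; have [fxA | fxA] := boolP (f x \in A).
  by rewrite (bigD1 (f x)) //= eqxx big1 // => j /andP[_ /negbTE]; rewrite eq_sym => ->.
by rewrite big1 // => j jA; case: eqP fxA => // ->; rewrite jA.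
Qed.

Section Translations.
Variables (p n N : nat) (phi : 'I_N -> 'rV['F_p]_n) (psi : 'rV['F_p]_n -> 'I_N).
Hypotheses (p_pr : prime p) (phiK : cancel phi psi) (psiK : cancel psi phi).

Local Notation eps := (lin_ext phi).

Lemma sum_reindex_psi (M : zmodType) (F : 'I_N -> M) : \sum_i F i = \sum_v F (psi v).
Proof. by rewrite (reindex psi) //; exact: onW_bij (Bijective psiK phiK). Qed.

Lemma lin_ext_surj y : exists2 x, x \in charX N & eps x = y.
Proof.
exists (rootv (psi y) (psi 0)); first exact: charX_root.
by rewrite lin_ext_root !psiK subr0.
Qed.

Lemma lin_ext_root_neq0 a : is_root a -> eps a != 0.
Proof. by case=> i [j [ij ->]]; rewrite lin_ext_root subr_eq0 (can_eq phiK). Qed.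

Lemma transl_subproof t : injective (fun i => psi (phi i + t)).
Proof. by move=> i j /(congr1 phi); rewrite !psiK => /addIr/(can_inj phiK). Qed.

Definition transl t : {perm 'I_N} := perm (@transl_subproof t).

Lemma translE t i : transl t i = psi (phi i + t).
Proof. by rewrite permE. Qed.

Lemma wact_translE t chi v : wact (transl t) chi 0 (psi v) = chi 0 (psi (v - t)).
Proof.
have -> : psi v = transl t (psi (v - t)) by rewrite translE psiK subrK.
by rewrite mxE permK.
Qed.

Lemma translD s t : transl (s + t) = (transl s * transl t)%g.
Proof. by apply/permP => i; rewrite permM !translE psiK addrA. Qed.

Lemma transl_inj : injective transl.
Proof.
move=> s t /(congr1 (fun w : {perm 'I_N} => phi (w (psi 0)))).
by rewrite /= !translE !psiK !add0r.
Qed.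

Definition Transl : {set {perm 'I_N}} := transl @: setT.

Lemma Transl_group_set : group_set Transl.
Proof.
apply/group_setP; split.
  by apply/imsetP; exists 0 => //; apply/permP => i; rewrite translE addr0 phiK perm1.
by move=> _ _ /imsetP[s _ ->] /imsetP[t _ ->]; rewrite -translD imset_f.
Qed.

Canonical Transl_group := group Transl_group_set.

Lemma card_Transl : #|Transl| = (p ^ n)%N.
Proof. by rewrite card_imset ?cardsT ?card_mx ?card_Fp ?mul1n //; apply: transl_inj. Qed.

Lemma lin_ext_transl t chi : chi \in charX N -> eps (wact (transl t) chi) = eps chi.
Proof.
move=> chiX; rewrite lin_ext_wact.
have -> : phi \o transl t = (fun i => phi i + t).
  by apply/funext => i; rewrite /= translE psiK.
by rewrite lin_ext_addf lin_ext_cst ?addr0.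
Qed.

Lemma Weps_lin_ext : Weps eps = Transl.
Proof.
apply/setP => w; rewrite inE; apply/asboolP/imsetP => [w_eps | [t _ ->] chi chiX].
  exists (phi (w (psi 0))) => //; apply/permP => i; rewrite translE.
  have := w_eps _ (charX_root i (psi 0)).
  rewrite lin_ext_wact !lin_ext_root /= psiK subr0 => /eqP; rewrite subr_eq => /eqP <-.
  by rewrite phiK.
exact: lin_ext_transl.
Qed.

Lemma Transl_Sylow : (p.-Sylow(Weps eps) Transl)%g.
Proof.
by rewrite Weps_lin_ext pHallE subxx /= card_Transl part_pnat_id // pnatX pnat_id.
Qed.

Lemma Sylow_Weps_lin_ext (P : {group {perm 'I_N}}) :
  (p.-Sylow(Weps eps) P)%g -> P :=: Transl.
Proof.
rewrite Weps_lin_ext => sylP; apply: pHall_id sylP _.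
by rewrite /pgroup card_Transl pnatX pnat_id.
Qed.

Lemma charX_Transl_fixed chi : chi \in charX N ->
  (forall w, w \in Transl -> wact w chi = chi) -> chi = 0.
Proof.
move=> chiX chi_fixed; apply: charX_const0 => // i j.
have /chi_fixed/wact_fixE/(_ i) : transl (phi j - phi i) \in Transl by apply: imset_f.
by rewrite translE addrC subrK phiK.
Qed.

Lemma lin_ext_periodic chi t : chi \in charX N -> t != 0 ->
  (forall v, chi 0 (psi (v + t)) = chi 0 (psi v)) -> eps chi = 0.
Proof.
move=> /eqP chiX t_nz chi_per.
have -> : eps chi = \sum_v v *~ chi 0 (psi v).
  by rewrite /lin_ext sum_reindex_psi; under eq_bigr do rewrite psiK.
apply: periodic_weighted_sum p_pr t_nz chi_per _.
by rewrite -(sum_reindex_psi (chi 0)) chiX.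
Qed.

Lemma transl_orbit_inj x : x \in charX N -> eps x != 0 ->
  injective (fun t => wact (transl t) x).
Proof.
move=> xX eps_nz t1 t2 /= orbit_eq; apply/eqP; rewrite -subr_eq0.
apply: contraNT eps_nz => t_nz; apply/eqP; apply: (lin_ext_periodic xX t_nz) => v.
have := congr1 (fun y : 'rV[int]_N => y 0 (psi (v + t1))) orbit_eq.
by rewrite /= !wact_translE addrK => ->; rewrite addrA.
Qed.

Lemma lin_ext_fiber_count s x : uniq s -> {subset s <= charX N} ->
  (forall t y, y \in s -> wact (transl t) y \in s) ->
  x \in s -> eps x != 0 -> (p ^ n <= count (fun y => eps y == eps x) s)%N.
Proof.
move=> s_uniq sX s_inv xs eps_nz.
pose orbit := [seq wact (transl t) x | t : 'rV['F_p]_n].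
have orbit_uniq : uniq orbit.
  by rewrite map_inj_uniq ?enum_uniq //; apply: transl_orbit_inj; rewrite ?sX.
rewrite -size_filter -card_Transl card_imset ?cardsT; last exact: transl_inj.
apply: leq_trans (uniq_leq_size orbit_uniq _); first by rewrite size_map -cardE.
move=> _ /mapP[t _ ->].
by rewrite mem_filter lin_ext_transl ?sX ?s_inv ?eqxx.
Qed.

Lemma Rank_ge_Transl (P : {set {perm 'I_N}}) :
  Transl \subset P -> Rank_ge p P (charX N) (n * p ^ n).
Proof.
move=> TP s s_uniq sX s_inv [d [s_index d_coprime]].
set E := [set e in map eps s | e != 0%R].
have n_le_E : (n <= #|E|)%N.
  apply: rV_span_card_nonzero => y.
  have d_nz : (d%:R : 'F_p) != 0.
    by rewrite -(dvdn_pcharf (pchar_Fp p_pr)) -prime_coprime // coprime_sym.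
  have [x xX eps_x] := lin_ext_surj (d%:R^-1 *: y).
  have := lin_ext_in_span phi (has_index_mulrn (@charXD N) s_index xX).
  by rewrite raddfMn /= eps_x -scaler_nat scalerA mulfV // scale1r.
have T_inv t y : y \in s -> wact (transl t) y \in s.
  by apply/s_inv/(subsetP TP)/imset_f.
apply: (@leq_trans (\sum_(e in E) p ^ n)).
  by rewrite sum_nat_const leq_mul2r n_le_E orbT.
apply: leq_trans (count_size (fun y => eps y \in E) s).
rewrite -sum_count_fibers; apply: leq_sum => e.
by rewrite inE => /andP[/mapP[x xs ->] eps_nz]; apply: lin_ext_fiber_count.
Qed.

End Translations.

Lemma ord_rV_Fp_bij p n : prime p ->
  exists (phi : 'I_(p ^ n) -> 'rV['F_p]_n) psi, cancel phi psi /\ cancel psi phi.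
Proof.
move=> p_pr; have card_rV : #|{: 'rV['F_p]_n}| = (p ^ n)%N.
  by rewrite card_mx card_Fp // mul1n.
exists (fun i => enum_val (cast_ord (esym card_rV) i)).
exists (fun v => cast_ord card_rV (enum_rank v)).
by split=> [i | v]; rewrite ?enum_valK ?cast_ordKV // cast_ordK enum_rankK.
Qed.

Theorem proposition14p1 (k0 : fieldType) (p n : nat)
  (hp : prime p) (hchar : p \notin [pchar k0]) (hn : (1 <= n)%N) :
  exists eps : 'rV[int]_(p ^ n) -> 'rV['F_p]_n,
    (forall x y, x \in charX (p ^ n) -> y \in charX (p ^ n) ->
        eps (x + y) = eps x + eps y) /\
    (forall y : 'rV['F_p]_n, exists2 x, x \in charX (p ^ n) & eps x = y) /\
    (forall a, is_root a -> eps a != 0) /\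
    (exists P : {group {perm 'I_(p ^ n)}},
        (p.-Sylow(Weps eps) P)%g /\
        (forall chi, chi \in charX (p ^ n) ->
           (forall w, w \in P -> wact w chi = chi) -> chi = 0)) /\
    (forall P : {group {perm 'I_(p ^ n)}},
        (p.-Sylow(Weps eps) P)%g -> Rank_ge p P (charX (p ^ n)) (n * p ^ n)).
Proof.
have [phi [psi [phiK psiK]]] := ord_rV_Fp_bij n hp.
exists (lin_ext phi); split; first by move=> x y _ _; apply: raddfD.
split; first exact: lin_ext_surj.
split; first exact: lin_ext_root_neq0.
split.
  exists (Transl_group phiK psiK); split; first exact: Transl_Sylow.
  exact: charX_Transl_fixed.
move=> P /(Sylow_Weps_lin_ext hp phiK psiK) P_Transl.
by apply: (Rank_ge_Transl hp (phiK := phiK) (psiK := psiK)); rewrite P_Transl.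
Qed.
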